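(* Let $X$ be an arbitrary set, let $E$ be an equivalence relation on $X$ whose partition into $E$-classes is an $m$-partition $\mathcal{P}=\{X_1,\ldots,X_m\}$ (with $m$ a positive integer), and let $f\in T(X,\mathcal{P})$. Then the following are equivalent: (i) $f\in\Sigma(X,\mathcal{P})$; (ii) $\chi^{(f)}$ is a bijection of $\{1,\ldots,m\}$; (iii) $f$ is $E^*$-preserving; (iv) $f\in S_{\mathcal{P}}(X)$ and $Af^{-1}\neq\emptyset$ for every nonempty open set $A\subseteq X$.
   Context: Maps are written on the right; $Af^{-1}=\{x\mid xf\in A\}$. $T(X,\mathcal{P})=\{f\colon X\to X\mid \forall i\ \exists j:\ X_if\subseteq X_j\}$ and $\Sigma(X,\mathcal{P})=\{f\in T(X,\mathcal{P})\mid Xf\cap X_i\neq\emptyset\ \forall i\}$. For $f\in T(X,\mathcal{P})$, $\chi^{(f)}\colon\{1,\ldots,m\}\to\{1,\ldots,m\}$ is given by $i\chi^{(f)}=j$ whenever $X_if\subseteq X_j$. A map $f$ is $E^*$-preserving if $(x,y)\in E\iff(xf,yf)\in E$ for all $x,y\in X$. The topology on $X$ with $\mathcal{P}$ as a basis has as open sets exactly the unions of blocks; $S_{\mathcal{P}}(X)$ is the set of continuous selfmaps of $X$ for this topology. *)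

From mathcomp Require Import all_boot.
From Stdlib Require Import ClassicalEpsilon.
Set Implicit Arguments. Unset Strict Implicit. Unset Printing Implicit Defensive.

Section Defs.
Variables (X : Type) (m : nat) (P : 'I_m -> X -> Prop).

Definition is_m_partition : Prop :=
  (forall i, exists x, P i x) /\
  (forall i j x, P i x -> P j x -> i = j) /\
  (forall x, exists i, P i x).

Definition classes_are (E : X -> X -> Prop) : Prop :=
  forall x y, E x y <-> exists i, P i x /\ P i y.

Definition in_T (f : X -> X) : Prop :=
  forall i, exists j, forall x, P i x -> P j (f x).

Definition in_Sigma (f : X -> X) : Prop :=
  in_T f /\ forall i, exists x, P i (f x).

(* chi^(f): i chi = j whenever X_i f ⊆ X_j (chosen by epsilon; unique for f in T) *)
Definition chi (f : X -> X) (i : 'I_m) : 'I_m :=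
  epsilon (inhabits i) (fun j => forall x, P i x -> P j (f x)).

Definition Estar_preserving (E : X -> X -> Prop) (f : X -> X) : Prop :=
  forall x y, E x y <-> E (f x) (f y).

(* open sets of the topology with basis P: exactly the unions of blocks *)
Definition P_open (A : X -> Prop) : Prop :=
  exists S : 'I_m -> Prop, forall x, A x <-> exists i, S i /\ P i x.

Definition P_continuous (f : X -> X) : Prop :=
  forall A, P_open A -> P_open (fun x => A (f x)).

End Defs.

From mathcomp Require Import all_boot.
From Stdlib Require Import ClassicalEpsilon.
Set Implicit Arguments. Unset Strict Implicit. Unset Printing Implicit Defensive.

(* Every condition is a property of the block map chi = chi^(f) on the finite
   set of block indices: f in Sigma and "A f^-1 nonempty for open A" both say
   that chi is onto, E*-preservation says that chi is one-to-one, and every f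
   in T(X,P) is continuous because the preimage of the union of the blocks in
   S is the union of the blocks i with chi i in S.  On a finite set, onto and
   one-to-one both amount to bijective. *)

Lemma fin_bij_surj (T : finType) (c : T -> T) :
  bijective c <-> forall y, exists x, c x = y.
Proof.
split=> [[g _ gK] y | c_onto]; first by exists (g y).
pose g y := odflt y [pick x | c x == y].
have gK : cancel g c.
  move=> y; rewrite /g; case: pickP => [x /eqP //| no_x].
  by have [x cx] := c_onto y; move: (no_x x); rewrite cx eqxx.
exact: bij_can_bij (injF_bij (can_inj gK)) _ gK.
Qed.

Lemma fin_bij_inj (T : finType) (c : T -> T) : bijective c <-> injective c.
Proof. by split; [exact: bij_inj | exact: injF_bij]. Qed.

Section BlockMap.
Variables (X : Type) (m : nat) (P : 'I_m -> X -> Prop) (f : X -> X).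
Hypothesis P_part : is_m_partition P.
Hypothesis f_T : in_T P f.

Let chi := chi P f.

Lemma block_nonempty i : exists x, P i x.
Proof. by case: P_part. Qed.

Lemma block_cover x : exists i, P i x.
Proof. by case: P_part => _ []. Qed.

Lemma block_uniq i j x : P i x -> P j x -> i = j.
Proof. by case: P_part => _ [uniqP _]; exact: uniqP. Qed.

Lemma chiP i x : P i x -> P (chi i) (f x).
Proof. exact: epsilon_spec (inhabits i) _ (f_T i) x. Qed.

Lemma chi_block i j x : P i x -> P j (f x) -> chi i = j.
Proof. by move=> Pix; apply: block_uniq (chiP Pix). Qed.

Lemma Sigma_chi_surj : in_Sigma P f <-> forall j, exists i, chi i = j.
Proof.
split=> [[_ meets] j | chi_onto].
  have [x Pjfx] := meets j; have [i Pix] := block_cover x.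
  by exists i; exact: chi_block Pix Pjfx.
split=> // j; have [i <-] := chi_onto j; have [x Pix] := block_nonempty i.
by exists x; exact: chiP.
Qed.

Lemma open_preim_chi_surj :
  (forall A, P_open P A -> (exists x, A x) -> exists x, A (f x)) <->
  (forall j, exists i, chi i = j).
Proof.
split=> [preim_ne j | chi_onto A [S A_S] [y]].
  have Pj_open : P_open P (P j).
    by exists (eq^~ j) => x; split=> [|[i [-> //]]]; exists j.
  have [x Pjfx] := preim_ne _ Pj_open (block_nonempty j).
  have [i Pix] := block_cover x.
  by exists i; exact: chi_block Pix Pjfx.
rewrite A_S => -[j [Sj Pjy]]; have [i chi_ij] := chi_onto j.
have [x Pix] := block_nonempty i; exists x; apply/A_S.
by exists j; split=> //; rewrite -chi_ij; exact: chiP.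
Qed.

Lemma T_continuous : P_continuous P f.
Proof.
move=> A [S A_S]; exists (fun i => S (chi i)) => x; rewrite A_S.
split=> [[j [Sj Pjfx]] | [i [Si Pix]]]; last by exists (chi i); split; last exact: chiP.
have [i Pix] := block_cover x.
by exists i; rewrite (chi_block Pix Pjfx).
Qed.

Variable E : X -> X -> Prop.
Hypothesis E_classes : classes_are P E.

Lemma Estar_chi_inj : Estar_preserving E f <-> injective chi.
Proof.
split=> [f_Estar i j chi_ij | chi_inj x y].
  have [x Pix] := block_nonempty i; have [y Pjy] := block_nonempty j.
  have : E (f x) (f y).
    by apply/E_classes; exists (chi i); rewrite {2}chi_ij; split; exact: chiP.
  rewrite -f_Estar => /E_classes [k [Pkx Pky]].
  by rewrite (block_uniq Pix Pkx) (block_uniq Pjy Pky).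
rewrite !E_classes; split=> [[i [Pix Piy]] | [k [Pkfx Pkfy]]].
  by exists (chi i); split; exact: chiP.
have [i Pix] := block_cover x; have [j Pjy] := block_cover y.
have eq_ij : i = j by apply: chi_inj; rewrite (chi_block Pix Pkfx) (chi_block Pjy Pkfy).
by exists i; split; last rewrite eq_ij.
Qed.

End BlockMap.

Theorem corollary3p5 (X : Type) (m : nat) (P : 'I_m -> X -> Prop)
    (E : X -> X -> Prop) (f : X -> X) :
  0 < m ->
  is_m_partition P ->
  classes_are P E ->
  in_T P f ->
  [/\ (in_Sigma P f <-> bijective (chi P f)),
      (bijective (chi P f) <-> Estar_preserving E f) &
      (Estar_preserving E f <->
        (P_continuous P f /\
         forall A : X -> Prop, P_open P A -> (exists x, A x) ->
           exists x, A (f x)))].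
Proof.
move=> _ P_part E_classes f_T.
have f_cont := T_continuous P_part f_T.
split.
- by rewrite fin_bij_surj Sigma_chi_surj.
- by rewrite fin_bij_inj (Estar_chi_inj P_part f_T E_classes).
- rewrite (Estar_chi_inj P_part f_T E_classes) -fin_bij_inj fin_bij_surj.
  rewrite -(open_preim_chi_surj P_part f_T).
  by split=> [chi_onto | [_ chi_onto]].
Qed.
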